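(* Let $X$ be a real normed space and let $w$ denote the weak topology on $X$ (generated by all norm-continuous linear functionals on $X$). Then every topologically linearly independent subset of $(X,w)$ is finite.
   Context: A subset $A\subseteq X\setminus\{0\}$ of a topological vector space $X$ is topologically linearly independent if for every neighborhood $W$ of $0$ there is a neighborhood $U$ of $0$ such that for every finite $F\subseteq A$ and reals $\{r_a: a\in F\}$, $\sum_{a\in F}r_a a\in U$ implies $r_a a\in W$ for all $a\in F$. *)

From mathcomp Require Import all_boot all_order all_algebra.
From mathcomp Require Import all_classical all_reals all_analysis.
Set Implicit Arguments. Unset Strict Implicit. Unset Printing Implicit Defensive.
Import Order.TTheory GRing.Theory Num.Theory.
Import numFieldNormedType.Exports.
Local Open Scope classical_set_scope.
Local Open Scope ring_scope.

Definition cont_lin_functional (R : realType) (X : normedModType R)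
  (f : X -> R) : Prop :=
  (forall (a : R) (x y : X), f (a *: x + y) = a * f x + f y) /\ continuous f.

(* W is a neighbourhood of 0 in the weak topology sigma(X, X') (X' = topological dual): it contains
   a basic weak open set {x | |f_i x| < eps for i < n} determined by finitely
   many continuous linear functionals f_0..f_(n-1) and eps > 0. *)
Definition weak_nbhs0 (R : realType) (X : normedModType R) (W : set X) : Prop :=
  exists (n : nat) (f : ordinal n -> X -> R) (eps : R),
    [/\ forall i, cont_lin_functional (f i), 0 < eps &
        [set x | forall i, `|f i x| < eps] `<=` W].

Definition weak_top_lin_indep (R : realType) (X : normedModType R) (A : set X) : Prop :=
  A `<=` ~` [set 0] /\
  forall W : set X, weak_nbhs0 W ->
    exists U : set X, weak_nbhs0 U /\
      forall (F : seq X) (r : X -> R),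
        uniq F -> {subset F <= A} ->
        U (\sum_(a <- F) r a *: a) ->
        forall a, a \in F -> W (r a *: a).

From mathcomp Require Import all_boot all_order all_algebra.
From mathcomp Require Import all_classical all_reals all_analysis.
From mathcomp Require Import ring lra.
Set Implicit Arguments. Unset Strict Implicit. Unset Printing Implicit Defensive.
Import Order.TTheory GRing.Theory Num.Theory.
Import numFieldNormedType.Exports.
Local Open Scope classical_set_scope.
Local Open Scope ring_scope.

(* If [A] were infinite, pick distinct [a_0, a_1, ...] in [A].  Hahn-Banach gives
   functionals [phi_k] of norm at most one with [phi_k (a_k) = |a_k|], and a series
   [f = sum_k c_k phi_k] with positive, rapidly decreasing coefficients chosen one at a
   time is a continuous functional vanishing at no [a_n].  Let [W = {|f| < 1}].  A weak
   neighbourhood [U] of [0] contains the common kernel of [m] functionals, which meets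
   the span of [a_0, ..., a_m] in some [sum_i r_i a_i] with [r_j != 0]; rescaling it
   so that [f (r_j a_j) = 1] keeps it in [U] while [r_j a_j] leaves [W]. *)

Section LinearFunctional.
Variables (R : realType) (X : normedModType R).

Definition linear_functional (f : X -> R) :=
  forall (t : R) (x y : X), f (t *: x + y) = t * f x + f y.

Variables (f : X -> R) (f_lin : linear_functional f).

Lemma linear_functional0 : f 0 = 0.
Proof.
have := f_lin 1 0 0; rewrite scaler0 addr0 mul1r => h.
by apply: (addrI (f 0)); rewrite addr0 -h.
Qed.

Lemma linear_functionalZ t x : f (t *: x) = t * f x.
Proof. by have := f_lin t x 0; rewrite addr0 linear_functional0 addr0. Qed.

Lemma linear_functionalD x y : f (x + y) = f x + f y.
Proof. by have := f_lin 1 x y; rewrite scale1r mul1r. Qed.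

Lemma linear_functionalN x : f (- x) = - f x.
Proof. by rewrite -scaleN1r linear_functionalZ mulN1r. Qed.

Lemma linear_functional_sum (I : Type) (s : seq I) (P : pred I) (F : I -> X) :
  f (\sum_(i <- s | P i) F i) = \sum_(i <- s | P i) f (F i).
Proof.
elim: s => [|x s IH]; first by rewrite !big_nil linear_functional0.
by rewrite !big_cons; case: (P x); rewrite ?linear_functionalD IH.
Qed.

Lemma bounded_linear_functional_continuous C :
  (forall x, `|f x| <= C * `|x|) -> continuous f.
Proof.
move=> f_bnd x; apply/cvgrPdist_lt => e e0.
have C1_gt0 : 0 < `|C| + 1 by rewrite ltr_pwDr.
have : \forall y \near x, `|x - y| < e / (`|C| + 1).
  by apply: cvgr_dist_lt; [exact: cvg_id | rewrite divr_gt0].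
apply: filterS => y xy_small.
rewrite -linear_functionalN -linear_functionalD.
apply: le_lt_trans (f_bnd _) _.
apply: (@le_lt_trans _ _ ((`|C| + 1) * `|x - y|)).
  by rewrite ler_wpM2r // (le_trans (ler_norm _)) // lerDl.
by rewrite -ltr_pdivlMl // mulrC.
Qed.

End LinearFunctional.

Section NormingFunctional.
Variables (R : realType) (X : normedModType R).

Definition dominated_graph (G : set (X * R)) :=
  [/\ forall t y1 v1 y2 v2, G (y1, v1) -> G (y2, v2) -> G (t *: y1 + y2, t * v1 + v2),
      forall x v w, G (x, v) -> G (x, w) -> v = w &
      forall x v, G (x, v) -> v <= `|x| ].

Definition line_graph (a : X) : set (X * R) :=
  [set p | exists t, p = (t *: a, t * `|a|)].

Lemma line_graph_dominated a : a != 0 -> dominated_graph (line_graph a).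
Proof.
move=> a_neq0; split.
- move=> t y1 v1 y2 v2 [s1 [-> ->]] [s2 [-> ->]].
  by exists (t * s1 + s2); rewrite scalerDl scalerA mulrDl mulrA.
- move=> x v w [s1 [-> ->]] [s2 [e ->]].
  have : (s1 - s2) *: a = 0 by rewrite scalerBl e subrr.
  by move/eqP; rewrite scaler_eq0 (negbTE a_neq0) orbF subr_eq0 => /eqP ->.
- by move=> x v [s [-> ->]]; rewrite normrZ ler_wpM2r // ler_norm.
Qed.

Lemma dominated_graph_bigcup (F : set (set (X * R))) :
  F `<=` dominated_graph -> total_on F subset ->
  dominated_graph (\bigcup_(G in F) G).
Proof.
move=> F_dom F_tot.
have common G1 G2 p q : F G1 -> F G2 -> G1 p -> G2 q ->
    exists G, [/\ F G, G p & G q].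
  move=> FG1 FG2 G1p G2q; have [G12|G21] := F_tot _ _ FG1 FG2.
    by exists G2; split => //; exact: G12.
  by exists G1; split => //; exact: G21.
split.
- move=> t y1 v1 y2 v2 [G1 FG1 G1p] [G2 FG2 G2q].
  have [G [FG Gp Gq]] := common _ _ _ _ FG1 FG2 G1p G2q.
  have [G_lin _ _] := F_dom _ FG; exists G => //; exact: G_lin.
- move=> x v w [G1 FG1 G1p] [G2 FG2 G2q].
  have [G [FG Gp Gq]] := common _ _ _ _ FG1 FG2 G1p G2q.
  have [_ G_fun _] := F_dom _ FG; exact: G_fun Gp Gq.
- by move=> x v [G FG Gp]; have [_ _ G_dom] := F_dom _ FG; exact: G_dom Gp.
Qed.

Section Extension.
Variables (G : set (X * R)) (x : X).
Hypotheses (G_dom : dominated_graph G) (G00 : G (0, 0)).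

Lemma dominated_graph_scale s y v : G (y, v) -> G (s *: y, s * v).
Proof.
by have [G_lin _ _] := G_dom => Gyv; have := G_lin s _ _ _ _ Gyv G00; rewrite !addr0.
Qed.

(* The one-dimensional step of Hahn-Banach: [c] lies between the supremum of
   [v - |y - x|] and the infimum of [|z + x| - w] over [(y, v)], [(z, w)] in [G]. *)
Lemma dominated_graph_extension_value : exists c : R, forall s y v, 0 < s -> G (y, v) ->
  v + s * c <= `|y + s *: x| /\ v - s * c <= `|y - s *: x|.
Proof.
have [G_lin _ G_le] := G_dom.
pose S := [set z | exists y v, G (y, v) /\ z = v - `|y - x|].
have S_ub z w : G (z, w) -> ubound S (`|z + x| - w).
  move=> Gzw _ [y [v [Gyv ->]]].
  have := G_le _ _ (G_lin 1 _ _ _ _ Gyv Gzw); rewrite scale1r mul1r => h.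
  have := ler_normD (y - x) (z + x).
  rewrite -addrA [z + x]addrC addKr => h2; lra.
have S_sup : has_sup S.
  by split; [exists (0 - `|0 - x|), 0, 0 | exists (`|0 + x| - 0); exact: S_ub].
exists (sup S) => s y v s_gt0 Gyv.
have Gy := dominated_graph_scale s^-1 Gyv.
have c_ge := sup_upper_bound S_sup (ex_intro _ _ (ex_intro _ _ (conj Gy erefl))).
have c_le := ge_sup (proj1 S_sup) (S_ub _ _ Gy).
have scaleK z : s *: (s^-1 *: y + z) = y + s *: z.
  by rewrite scalerDr scalerA divff ?gt_eqF // scale1r.
rewrite -(scalerN s x) -!scaleK !normrZ gtr0_norm //.
have mulK w : s * (s^-1 * w) = w by rewrite mulrA divff ?gt_eqF // mul1r.
split.
- have := ler_wpM2l (ltW s_gt0) c_le; rewrite mulrBr mulK => h; lra.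
- have := ler_wpM2l (ltW s_gt0) c_ge; rewrite mulrBr mulK => h; lra.
Qed.

Lemma dominated_graph_extend : ~ (exists v, G (x, v)) ->
  exists2 G' : set (X * R), dominated_graph G' & G `<` G'.
Proof.
move=> x_notin; have [G_lin G_fun G_le] := G_dom.
have [c c_spec] := dominated_graph_extension_value.
pose G' := [set p | exists y v t, G (y, v) /\ p = (y + t *: x, v + t * c)].
exists G'; last first.
  split; first by move=> [y v] Gyv; exists y, v, 0; rewrite scale0r mul0r !addr0.
  move=> G'G; apply: x_notin; exists c; apply: G'G.
  by exists 0, 0, 1; rewrite scale1r mul1r !add0r.
split.
- move=> t _ _ _ _ [y1 [v1 [t1 [G1 [-> ->]]]]] [y2 [v2 [t2 [G2 [-> ->]]]]].
  exists (t *: y1 + y2), (t * v1 + v2), (t * t1 + t2); split; first exact: G_lin.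
  congr (_, _); last by ring.
  by rewrite scalerDr scalerDl scalerA addrACA.
- move=> z v w [y1 [v1 [t1 [G1 [e1 ->]]]]] [y2 [v2 [t2 [G2 [e2 ->]]]]].
  have e : y1 + t1 *: x = y2 + t2 *: x by rewrite -e1 -e2.
  have [t12|t12] := eqVneq t1 t2.
    rewrite -t12 in e; move: G1; rewrite (addIr _ e) => G1.
    by rewrite -t12 (G_fun _ _ _ G1 G2).
  exfalso; apply: x_notin.
  have x_eq : x = (t1 - t2)^-1 *: (-1 *: y1 + y2).
    have -> : -1 *: y1 + y2 = (t1 - t2) *: x.
      rewrite scaleN1r addrC; apply/eqP.
      by rewrite subr_eq scalerBl addrAC [_ + y1]addrC e addrK.
    by rewrite scalerA mulVf ?scale1r // subr_eq0.
  by eexists; rewrite x_eq; exact: dominated_graph_scale (G_lin _ _ _ _ _ G1 G2).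
- move=> z v [y [v1 [t [Gyv [-> ->]]]]].
  have [t_lt0|t_gt0|->] := ltgtP t 0.
  + have := c_spec (- t) _ _ _ Gyv; rewrite oppr_gt0 => /(_ t_lt0) [_].
    by rewrite mulNr opprK scaleNr opprK.
  + by have [] := c_spec t _ _ t_gt0 Gyv.
  + by rewrite scale0r mul0r !addr0; exact: G_le.
Qed.

End Extension.

Theorem norming_functional a : a != 0 -> exists phi : X -> R,
  [/\ linear_functional phi, forall x, `|phi x| <= `|x| & phi a = `|a|].
Proof.
move=> a_neq0; have line_dom := line_graph_dominated a_neq0.
(* [set0] is admitted so that the empty chain has an upper bound. *)
pose P G := dominated_graph G /\ (G = set0 \/ line_graph a `<=` G).
have P_chain F : F `<=` P -> total_on F subset -> P (\bigcup_(G in F) G).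
  move=> FP F_tot; split; first by apply: dominated_graph_bigcup => // G /FP[].
  have [[G [FG lineG]]|no_line] := pselect (exists G, F G /\ line_graph a `<=` G).
    by right => p /lineG Gp; exists G.
  left; apply/seteqP; split => // p [G FG Gp].
  have [_ [G0|lineG]] := FP _ FG; first by rewrite G0 in Gp.
  by exfalso; apply: no_line; exists G.
have [M [[M_dom M_line] M_max]] := Zorn_bigcup P_chain.
have line_M : line_graph a `<=` M.
  case: M_line => // M0; exfalso; apply: (M_max (line_graph a)); last by split; [|right].
  by rewrite M0; split => // /(_ (0 *: a, 0 * `|a|)); apply; exists 0.
have M_total x : exists v, M (x, v).
  apply: contrapT => x_notin.
  have [|G' G'_dom MG'] := dominated_graph_extend M_dom _ x_notin.
    by have := line_M (0 *: a, 0 * `|a|) (ex_intro _ 0 erefl); rewrite scale0r mul0r.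
  by apply: (M_max G') => //; split; [|right; exact: subset_trans (properW MG')].
have [M_lin M_fun M_le] := M_dom.
pose phi x := xget 0 [set v | M (x, v)].
have M_phi x : M (x, phi x) by exact: (xgetPex 0 (M_total x)).
have phi_lin : linear_functional phi.
  by move=> t x y; apply: M_fun (M_phi _) (M_lin _ _ _ _ _ _ _).
exists phi; split => //.
- move=> x; rewrite ler_norml M_le // andbT.
  by rewrite lerNl -linear_functionalN // -(normrN x) M_le.
- apply: M_fun (M_phi a) _; have := line_M (1 *: a, 1 * `|a|) (ex_intro _ 1 erefl).
  by rewrite scale1r mul1r.
Qed.

End NormingFunctional.

Section NonvanishingFunctional.
Variables (R : realType) (X : normedModType R) (a : nat -> X) (phi : nat -> X -> R).
Hypotheses (phi_lin : forall k, linear_functional (phi k))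
  (phi_le : forall k x, `|phi k x| <= `|x|) (phi_a : forall k, phi k (a k) != 0).

Definition partial_sum (s : seq R) x := \sum_(0 <= k < size s) s`_k * phi k x.

(* The next coefficient is at most half the previous one, and small enough
   that the tail of the series cannot cancel the partial sum at the previous
   vector; it is halved when its own partial sum at [a (size s)] would vanish. *)
Definition coef_bound (s : seq R) : R :=
  if size s is j.+1
  then Num.min (s`_j / 2) (`|partial_sum s (a j)| / (4 * (`|a j| + 1))) else 1.

Definition next_coef s :=
  let b := coef_bound s in
  if partial_sum s (a (size s)) + b * phi (size s) (a (size s)) == 0 then b / 2 else b.

Fixpoint coefs n := if n is n.+1 then rcons (coefs n) (next_coef (coefs n)) else [::].

Definition coef k := next_coef (coefs k).

Definition term x k := coef k * phi k x.

Lemma size_coefs n : size (coefs n) = n.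
Proof. by elim: n => //= n IH; rewrite size_rcons IH. Qed.

Lemma nth_coefs n k : (k < n)%N -> (coefs n)`_k = coef k.
Proof.
elim: n => // n IH; rewrite ltnS leq_eqVlt => /orP[/eqP->|kn] /=;
  rewrite nth_rcons size_coefs ?ltnn ?eqxx // kn; exact: IH.
Qed.

Lemma partial_sum_coefs n x : partial_sum (coefs n) x = series (term x) n.
Proof.
rewrite /partial_sum size_coefs seriesEnat /=.
by apply: eq_big_nat => k /andP[_ kn]; rewrite nth_coefs.
Qed.

Lemma next_coef_spec j : 0 < coef_bound (coefs j) ->
  [/\ 0 < coef j, series (term (a j)) j.+1 != 0 & coef j <= coef_bound (coefs j)].
Proof.
have := phi_a j; rewrite seriesSr {2}/term /coef /next_coef size_coefs partial_sum_coefs.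
set b := coef_bound _; set S := series _ j; set p := phi j (a j) => p_neq0 b_gt0.
case: eqP => [S_eq|]; last by split => //; apply/eqP.
split; first by rewrite divr_gt0.
  have -> : S + b / 2 * p = - (b / 2 * p).
    by rewrite -[S](addrK (b * p)) S_eq; field.
  by rewrite oppr_eq0 mulf_neq0 // gt_eqF // divr_gt0.
by rewrite ler_pdivrMr // ler_pMr // ler1n.
Qed.

Lemma coef_bound_gt0 j : 0 < coef_bound (coefs j).
Proof.
elim: j => [|j IH]; first by rewrite /coef_bound /= ltr01.
have [c_gt0 S_neq0 _] := next_coef_spec IH.
rewrite /coef_bound size_coefs nth_coefs // partial_sum_coefs lt_min divr_gt0 //=.
by rewrite divr_gt0 ?normr_gt0 // mulr_gt0 // ltr_pwDr.
Qed.

Lemma coef_gt0 j : 0 < coef j.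
Proof. by have [] := next_coef_spec (coef_bound_gt0 j). Qed.

Lemma series_term_neq0 j : series (term (a j)) j.+1 != 0.
Proof. by have [] := next_coef_spec (coef_bound_gt0 j). Qed.

Lemma coef0_le1 : coef 0 <= 1.
Proof. by have [] := next_coef_spec (coef_bound_gt0 0). Qed.

Lemma coefS_le j : coef j.+1 <= coef j / 2 /\
  coef j.+1 <= `|series (term (a j)) j.+1| / (4 * (`|a j| + 1)).
Proof.
have [_ _] := next_coef_spec (coef_bound_gt0 j.+1).
by rewrite /coef_bound size_coefs nth_coefs // partial_sum_coefs le_min => /andP.
Qed.

Lemma sum_coef_le m n : \sum_(m <= k < n) coef k <= 2 * coef m.
Proof.
have [mn|nm] := leqP m n; last first.
  by rewrite big_geq ?(ltnW nm) // mulr_ge0 // ltW // coef_gt0.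
suff : \sum_(m <= k < n) coef k + 2 * coef n <= 2 * coef m.
  by have := coef_gt0 n; lra.
rewrite -(subnKC mn); elim: (n - m)%N => [|N IH]; first by rewrite addn0 big_geq // add0r.
rewrite addnS big_nat_recr ?leq_addr //=.
by have [h _] := coefS_le (m + N); lra.
Qed.

Lemma sum_norm_term_le x m n : \sum_(m <= k < n) `|term x k| <= 2 * coef m * `|x|.
Proof.
apply: (@le_trans _ _ (\sum_(m <= k < n) coef k * `|x|)).
  apply: ler_sum => k _; rewrite /term normrM gtr0_norm ?coef_gt0 //.
  by rewrite ler_wpM2l // ltW // coef_gt0.
by rewrite -mulr_suml ler_wpM2r // sum_coef_le.
Qed.

Lemma series_term_cvg x : cvgn (series (term x)).
Proof.
apply: normed_cvg; apply: nondecreasing_is_cvgn.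
  by apply/nondecreasing_seqP => k /=; rewrite seriesSr lerDl.
exists (2 * `|x|) => _ [n _ <-]; rewrite /series /=.
apply: le_trans (sum_norm_term_le x 0 n) _.
by apply: ler_wpM2r => //; have := coef0_le1; lra.
Qed.

Definition sum_functional x := limn (series (term x)).

Lemma dist_sum_functional_le x m :
  `|sum_functional x - series (term x) m| <= 2 * coef m * `|x|.
Proof.
have S_cvg : series (term x) @ \oo --> sum_functional x by exact: series_term_cvg.
have tail_le : \forall n \near \oo,
    `|series (term x) n - series (term x) m| <= 2 * coef m * `|x|.
  near=> n; rewrite sub_series_geq; last by near: n; exact: nbhs_infty_ge.
  exact: le_trans (ler_norm_sum _ _ _) (sum_norm_term_le x m n).
rewrite ler_norml; apply/andP; split.
  rewrite lerBrDr; apply: (cvgr_to_ge S_cvg).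
  by apply: filterS tail_le => n; rewrite ler_norml => /andP[]; lra.
rewrite lerBlDr; apply: (cvgr_to_le S_cvg).
by apply: filterS tail_le => n; rewrite ler_norml => /andP[]; lra.
Unshelve. all: by end_near.
Qed.

Lemma sum_functional_linear : linear_functional sum_functional.
Proof.
move=> t x y; rewrite /sum_functional.
have -> : term (t *: x + y) = t *: term x + term y.
  by apply/funext => k; rewrite /term phi_lin !fctE mulrDr mulrCA.
rewrite lim_seriesD; last exact: series_term_cvg.
  by rewrite lim_seriesZ //; exact: series_term_cvg.
by apply: is_cvg_seriesZ; exact: series_term_cvg.
Qed.

Lemma norm_sum_functional_le x : `|sum_functional x| <= 2 * `|x|.
Proof.
have := dist_sum_functional_le x 0.
rewrite /series /= big_geq // subr0 => /le_trans; apply.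
by apply: ler_wpM2r => //; have := coef0_le1; lra.
Qed.

Lemma sum_functional_neq0 j : sum_functional (a j) != 0.
Proof.
have [_ c_le] := coefS_le j.
have S_gt0 : 0 < `|series (term (a j)) j.+1| by rewrite normr_gt0 series_term_neq0.
have c_gt0 := coef_gt0 j.+1; have a_ge0 := normr_ge0 (a j).
rewrite ler_pdivlMr ?mulr_gt0 ?ltr_pwDr // in c_le.
apply/eqP => f0; have := dist_sum_functional_le (a j) j.+1.
rewrite f0 sub0r normrN; nra.
Qed.

End NonvanishingFunctional.

Lemma exists_functional_nonvanishing (R : realType) (X : normedModType R) (a : nat -> X) :
  (forall n, a n != 0) ->
  exists f : X -> R, cont_lin_functional f /\ forall n, f (a n) != 0.
Proof.
move=> a_neq0; have [phi phi_spec] := choice (fun n => norming_functional (a_neq0 n)).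
have phi_lin k : linear_functional (phi k) by have [] := phi_spec k.
have phi_le k x : `|phi k x| <= `|x| by have [] := phi_spec k.
have phi_a k : phi k (a k) != 0 by have [_ _ ->] := phi_spec k; rewrite normr_eq0.
exists (sum_functional a phi); split; last exact: sum_functional_neq0.
split; first exact: sum_functional_linear.
apply: (bounded_linear_functional_continuous (sum_functional_linear _ _ _) (C := 2)) => //.
exact: norm_sum_functional_le.
Qed.

Lemma infinite_set_seq (T : pointedType) (A : set T) :
  ~ finite_set A -> exists a : nat -> T, (forall n, A (a n)) /\ injective a.
Proof.
move=> /infiniteP/pcard_leP[a]; exists a; split; first by move=> n; exact: funS.
by move=> m n; apply: inj; rewrite inE.
Qed.

Lemma exists_nonzero_left_kernel (F : fieldType) n m (M : 'M[F]_(n, m)) :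
  (m < n)%N -> exists2 v : 'rV_n, v != 0 & v *m M = 0.
Proof.
move=> mn; have /rowV0Pn[v /sub_kermxP vM v_neq0] : kermx M != 0.
  by rewrite kermx_eq0 /row_free neq_ltn (leq_ltn_trans (rank_leq_col M)).
by exists v.
Qed.

Lemma weak_nbhs0_combination (R : realType) (X : normedModType R) (U : set X) :
  weak_nbhs0 U -> exists m, forall b : 'I_m.+1 -> X, exists r : 'I_m.+1 -> R,
    (exists i, r i != 0) /\ forall t, U (\sum_i (t * r i) *: b i).
Proof.
move=> [m [g [eps [g_cont eps_gt0 gU]]]]; exists m => b.
pose M := \matrix_(i < m.+1, j < m) g j (b i).
have [v /matrix0Pn[i0 [i vi_neq0]] vM] := exists_nonzero_left_kernel M (ltnSn m).
exists (v 0); split; first by exists i; rewrite -(ord1 i0).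
move=> t; apply: gU => j /=; have g_lin := (g_cont j).1.
rewrite linear_functional_sum //.
under eq_bigr do rewrite linear_functionalZ // -mulrA.
have := congr1 (fun w : 'rV_m => w 0 j) vM; rewrite !mxE => v_ker.
rewrite -mulr_sumr (eq_bigr (fun k => v 0 k * M k j)) => [|k _]; last by rewrite mxE.
by rewrite v_ker mulr0 normr0.
Qed.

Theorem proposition4p7 (R : realType) (X : normedModType R) (A : set X) :
  weak_top_lin_indep A -> finite_set A.
Proof.
move=> [A_neq0 A_indep]; apply: contrapT => /infinite_set_seq[a [Aa a_inj]].
have a_neq0 n : a n != 0 by apply/eqP; exact: A_neq0 (Aa n).
have [f [[f_lin f_cont] fa_neq0]] := exists_functional_nonvanishing a_neq0.
have W_nbhs : weak_nbhs0 [set x | `|f x| < 1].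
  by exists 1%N, (fun _ => f), 1; split => // x /(_ ord0).
have [U [/weak_nbhs0_combination[m U_comb] U_indep]] := A_indep _ W_nbhs.
have [r [[i0 r_i0] U_r]] := U_comb (fun i => a i).
pose t := (r i0 * f (a i0))^-1.
pose rho x := t * \sum_(i < m.+1 | a i == x) r i.
have rho_a (i : 'I_m.+1) : rho (a i) = t * r i.
  by rewrite /rho (eq_bigl (pred1 i)) ?big_pred1_eq // => k /=; rewrite (inj_eq a_inj).
pose F := [seq a (val i) | i <- enum 'I_m.+1].
have F_uniq : uniq F by rewrite map_inj_uniq ?enum_uniq // => i j /a_inj/val_inj.
have F_A : {subset F <= A} by move=> _ /mapP[i _ ->]; apply/mem_set.
have U_F : U (\sum_(x <- F) rho x *: x).
  by rewrite big_map big_enum /=; under eq_bigr do rewrite rho_a; exact: U_r.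
have a_i0F : a i0 \in F by apply/mapP; exists i0; rewrite ?mem_enum.
have := U_indep F rho F_uniq F_A U_F _ a_i0F.
by rewrite /= linear_functionalZ // rho_a -mulrA mulVf ?normr1 ?ltxx // mulf_neq0.
Qed.
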